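(* Let $D$ be an integral domain with quotient field $K$ and $n\ge1$. The set $\mathrm{Int}_{T_n(K)}(T_n(D))$ of right integer-valued polynomials and the set $\mathrm{Int}^{\ell}_{T_n(K)}(T_n(D))$ of left integer-valued polynomials on $T_n(D)$ with coefficients in $T_n(K)$ are subrings of $(T_n(K))[x]$.
   Context: $T_n(A)$ denotes the ring of upper triangular $n\times n$ matrices over a ring $A$; $(T_n(K))[x]$ is the polynomial ring in a central variable $x$ with coefficients in $T_n(K)$. For $f=\sum_k F_kx^k\in(T_n(K))[x]$ and $C\in T_n(K)$, right substitution is $f(C)=\sum_kF_kC^k$ and left substitution is $f(C)_\ell=\sum_kC^kF_k$. $\mathrm{Int}_{T_n(K)}(T_n(D))=\{f\in(T_n(K))[x]\mid\forall C\in T_n(D):\ f(C)\in T_n(D)\}$ and $\mathrm{Int}^{\ell}_{T_n(K)}(T_n(D))=\{f\in(T_n(K))[x]\mid\forall C\in T_n(D):\ f(C)_\ell\in T_n(D)\}$. *)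

From HB Require Import structures.
From mathcomp Require Import all_boot all_order all_algebra.
Set Implicit Arguments. Unset Strict Implicit. Unset Printing Implicit Defensive.
Import Order.TTheory GRing.Theory Num.Theory.
Local Open Scope ring_scope.

Definition upper_tri (R : nzRingType) (n : nat) (A : 'M[R]_n) : Prop :=
  forall i j : 'I_n, (j < i)%N -> A i j = 0.

Definition inD (D : idomainType) (x : {fraction D}) : Prop :=
  exists d : D, x = FracField.tofrac d.

Definition in_TnD (D : idomainType) (m : nat) (C : 'M[{fraction D}]_m) : Prop :=
  upper_tri C /\ forall i j, inD (C i j).

Definition poly_TnK (K : nzRingType) (m : nat) (f : {poly 'M[K]_m.+1}) : Prop :=
  forall k : nat, upper_tri f`_k.

Definition rsubst (R : nzRingType) (f : {poly R}) (C : R) : R :=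
  \sum_(k < size f) f`_k * C ^+ k.

Definition lsubst (R : nzRingType) (f : {poly R}) (C : R) : R :=
  \sum_(k < size f) C ^+ k * f`_k.

Definition IntR (D : idomainType) (n : nat) (f : {poly 'M[{fraction D}]_n.+1}) : Prop :=
  poly_TnK f /\ forall C, in_TnD C -> in_TnD (rsubst f C).

Definition IntL (D : idomainType) (n : nat) (f : {poly 'M[{fraction D}]_n.+1}) : Prop :=
  poly_TnK f /\ forall C, in_TnD C -> in_TnD (lsubst f C).

Definition is_subring (R : nzRingType) (S : R -> Prop) : Prop :=
  [/\ S 1, forall u v, S u -> S v -> S (u - v) & forall u v, S u -> S v -> S (u * v)].

From HB Require Import structures.
From mathcomp Require Import all_boot all_order all_algebra.
Set Implicit Arguments. Unset Strict Implicit. Unset Printing Implicit Defensive.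
Import Order.TTheory GRing.Theory Num.Theory.
Local Open Scope ring_scope.

(* For f = sum_k F_k x^k and A, C in T_n(D), consider f_A(C) = sum_k F_k A C^k, which is
   (f * A%:P).[C].  Since (f g)(C) = f_{g(C)}(C), closure of right integer-valued
   polynomials under products reduces to f_A(C) in T_n(D) for all A, C in T_n(D).
   Now f_A(C) is additive in A, and f_X(C) = f(B) X whenever X C = B X.  Every A in T_n(D)
   is a sum of differences of matrices X in T_n(D) intertwining C with some B in T_n(D):
   the unipotents 1 + a e_ij (i < j), with B = (1 + a e_ij) C (1 - a e_ij), and the
   scaled projections a P_k onto the coordinates >= k, with B = P_k C since P_k C P_k =
   P_k C for upper triangular C.  The left case is the right one transported along the
   transpose with respect to the anti-diagonal, an anti-automorphism of T_n(K) that turns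
   left substitution into right substitution. *)

Lemma rsubstE (R : nzRingType) (p : {poly R}) x : rsubst p x = p.[x].
Proof. by rewrite horner_coef. Qed.

Section HornerMul.
Variable R : nzSemiRingType.
Implicit Types (p q : {poly R}) (a b x : R).

Lemma horner_mul_hornerC p q x : (p * q).[x] = (p * q.[x]%:P).[x].
Proof.
elim/poly_ind: p => [|p c IHp]; first by rewrite !mul0r.
rewrite !mulrDl -!mulrA -!commr_polyX !mulrA !hornerD !hornerMX IHp.
by rewrite -!polyCM !hornerCM hornerC.
Qed.

Lemma horner_mulC_intertwine p a b x :
  a * x = b * a -> (p * a%:P).[x] = p.[b] * a.
Proof.
move=> ax_ba; elim/poly_ind: p => [|p c IHp]; first by rewrite !mul0r !horner0 mul0r.
rewrite mulrDl -mulrA -commr_polyX mulrA -polyCM hornerD hornerMX IHp hornerC.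
by rewrite -mulrA ax_ba mulrA hornerMXaddC mulrDl.
Qed.

End HornerMul.

Section UpperTriangular.
Variables (R : nzRingType) (n : nat).
Implicit Types (A B : 'M[R]_n.+1) (i j : 'I_n.+1) (f g : {poly 'M[R]_n.+1}).

Lemma upper_triB A B : upper_tri A -> upper_tri B -> upper_tri (A - B).
Proof. by move=> uA uB i j ji; rewrite !mxE uA // uB // subr0. Qed.

Lemma upper_triD A B : upper_tri A -> upper_tri B -> upper_tri (A + B).
Proof. by move=> uA uB i j ji; rewrite !mxE uA // uB // addr0. Qed.

Lemma upper_triM A B : upper_tri A -> upper_tri B -> upper_tri (A * B).
Proof.
move=> uA uB i j ji; rewrite !mxE; apply: big1 => l _.
by case: (ltnP l i) => [li | il]; [rewrite uA ?mul0r | rewrite uB ?mulr0 ?(leq_trans ji)].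
Qed.

Lemma upper_triZ a A : upper_tri A -> upper_tri (a *: A).
Proof. by move=> uA i j ji; rewrite mxE uA // mulr0. Qed.

Lemma upper_tri_diag (d : 'rV[R]_n.+1) : upper_tri (diag_mx d).
Proof. by move=> i j ji; rewrite mxE -val_eqE /= (gtn_eqF ji) mulr0n. Qed.

Lemma upper_tri1 : upper_tri (1 : 'M[R]_n.+1).
Proof. by rewrite -idmxE -diag_const_mx; exact: upper_tri_diag. Qed.

Lemma upper_tri_delta i j : (i <= j)%N -> upper_tri (delta_mx i j : 'M[R]_n.+1).
Proof.
move=> le_ij a b ba; rewrite mxE.
case: (eqVneq a i) ba => [-> | _] ba //=; case: (eqVneq b j) ba => [-> | _] ba //=.
by rewrite ltnNge le_ij in ba.
Qed.

Lemma poly_TnK1 : poly_TnK (1 : {poly 'M[R]_n.+1}).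
Proof.
move=> k; rewrite coef1; case: (k == 0)%N; first exact: upper_tri1.
by move=> i j _; rewrite mxE.
Qed.

Lemma poly_TnKB f g : poly_TnK f -> poly_TnK g -> poly_TnK (f - g).
Proof. by move=> uf ug k; rewrite coefB; exact: upper_triB. Qed.

Lemma poly_TnKM f g : poly_TnK f -> poly_TnK g -> poly_TnK (f * g).
Proof.
move=> uf ug k i j ji; rewrite coefM summxE.
by apply: big1 => l _; rewrite upper_triM.
Qed.

Definition tail_proj k : 'M[R]_n.+1 := diag_mx (\row_(i < n.+1) (k <= i)%:R).

Lemma tail_proj_upper k A : upper_tri A -> tail_proj k * A = tail_proj k * A * tail_proj k.
Proof.
move=> uA; apply/matrixP=> a b; rewrite -!mulmxE mul_mx_diag !mul_diag_mx !mxE.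
case: (ltnP b a) => [ba | ab]; first by rewrite uA ?mulr0 ?mul0r.
by case: (leqP k a) => [ka | _]; rewrite ?mul0r // (leq_trans ka ab) mulr1.
Qed.

Lemma delta_tail_proj i : delta_mx i i = tail_proj i - tail_proj i.+1.
Proof.
apply/matrixP=> a b; rewrite !mxE -mulrnBl.
have [<- | nab] := eqVneq a b; last first.
  by rewrite mulr0n; case: (eqVneq a i) nab => [-> | _] nab //=; rewrite eq_sym (negbTE nab).
by rewrite andbb mulr1n -val_eqE /=; case: ltngtP; rewrite ?subrr ?subr0.
Qed.

End UpperTriangular.

Arguments tail_proj {R n} k.

Section AntiTranspose.
Variables (R : comNzRingType) (n : nat).
Implicit Types (A B : 'M[R]_n.+1) (f g : {poly 'M[R]_n.+1}).

Definition antitrmx A : 'M[R]_n.+1 := \matrix_(i, j) A (rev_ord j) (rev_ord i).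

Fact antitrmx_is_zmod_morphism : zmod_morphism antitrmx.
Proof. by move=> A B; apply/matrixP=> i j; rewrite !mxE. Qed.

HB.instance Definition _ :=
  GRing.isZmodMorphism.Build _ _ antitrmx antitrmx_is_zmod_morphism.

Lemma antitrmxK : involutive antitrmx.
Proof. by move=> A; apply/matrixP=> i j; rewrite !mxE !rev_ordK. Qed.

Lemma antitrmx1 : antitrmx 1 = 1.
Proof. by apply/matrixP=> i j; rewrite !mxE (inj_eq rev_ord_inj) eq_sym. Qed.

Lemma antitrmxM A B : antitrmx (A * B) = antitrmx B * antitrmx A.
Proof.
apply/matrixP=> i j; rewrite !mxE (reindex_inj rev_ord_inj) /=.
by apply: eq_bigr => l _; rewrite !mxE mulrC.
Qed.

Lemma antitrmxX A k : antitrmx (A ^+ k) = antitrmx A ^+ k.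
Proof.
elim: k => [|k IHk]; first by rewrite !expr0 antitrmx1.
by rewrite exprS antitrmxM IHk exprSr.
Qed.

Lemma upper_tri_antitrmx A : upper_tri A -> upper_tri (antitrmx A).
Proof. by move=> uA i j ji; rewrite mxE uA //= ltn_sub2lE. Qed.

Lemma map_antitrmxK : involutive (map_poly antitrmx).
Proof. exact: map_polyK antitrmxK (raddf0 _). Qed.

Lemma map_antitrmx1 : map_poly antitrmx 1 = 1.
Proof. by rewrite -polyC1 map_polyC /= antitrmx1. Qed.

Lemma map_antitrmxM f g :
  map_poly antitrmx (f * g) = map_poly antitrmx g * map_poly antitrmx f.
Proof.
apply/polyP=> k; rewrite coef_map coefM coefMr raddf_sum.
by apply: eq_bigr => l _; rewrite /= antitrmxM !coef_map.
Qed.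

Lemma poly_TnK_map_antitrmx f : poly_TnK f -> poly_TnK (map_poly antitrmx f).
Proof. by move=> uf k; rewrite coef_map; exact: upper_tri_antitrmx. Qed.

Lemma lsubst_antitrmx f C :
  lsubst f C = antitrmx (map_poly antitrmx f).[antitrmx C].
Proof.
have summand k :
    C ^+ k * f`_k = antitrmx ((map_poly antitrmx f)`_k * antitrmx C ^+ k).
  by rewrite antitrmxM antitrmxX coef_map /= !antitrmxK.
rewrite horner_coef size_map_inj_poly ?raddf0 //; last exact: can_inj antitrmxK.
by rewrite /lsubst raddf_sum; apply: eq_bigr => k _; exact: summand.
Qed.

Lemma horner_map_antitrmx f C :
  (map_poly antitrmx f).[C] = antitrmx (lsubst f (antitrmx C)).
Proof. by rewrite lsubst_antitrmx !antitrmxK. Qed.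

End AntiTranspose.

Arguments antitrmx {R n} A.

Section IntegralEntries.
Variable D : idomainType.
Local Notation K := {fraction D}.
Implicit Types x y : K.

Lemma inD_nat k : inD (k%:R : K). Proof. by exists k%:R; rewrite rmorph_nat. Qed.
Lemma inD0 : inD (0 : K). Proof. exact: (inD_nat 0). Qed.
Lemma inD1 : inD (1 : K). Proof. exact: (inD_nat 1). Qed.

Lemma inDB x y : inD x -> inD y -> inD (x - y).
Proof. by move=> [a ->] [b ->]; exists (a - b); rewrite rmorphB. Qed.

Lemma inDD x y : inD x -> inD y -> inD (x + y).
Proof. by move=> [a ->] [b ->]; exists (a + b); rewrite rmorphD. Qed.

Lemma inDM x y : inD x -> inD y -> inD (x * y).
Proof. by move=> [a ->] [b ->]; exists (a * b); rewrite rmorphM. Qed.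

Lemma inD_sum m (F : 'I_m -> K) : (forall i, inD (F i)) -> inD (\sum_i F i).
Proof. by move=> FD; apply: big_ind => //; [exact: inD0 | exact: inDD]. Qed.

End IntegralEntries.

Section TriangularIntegralMatrices.
Variables (D : idomainType) (n : nat).
Local Notation M := 'M[{fraction D}]_n.+1.
Implicit Types (A B C X Y : M) (i j : 'I_n.+1).

Lemma in_TnDB X Y : in_TnD X -> in_TnD Y -> in_TnD (X - Y).
Proof.
by move=> [uX XD] [uY YD]; split=> [|i j]; [exact: upper_triB | rewrite !mxE; exact: inDB].
Qed.

Lemma in_TnDD X Y : in_TnD X -> in_TnD Y -> in_TnD (X + Y).
Proof.
by move=> [uX XD] [uY YD]; split=> [|i j]; [exact: upper_triD | rewrite !mxE; exact: inDD].
Qed.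

Lemma in_TnDM X Y : in_TnD X -> in_TnD Y -> in_TnD (X * Y).
Proof.
move=> [uX XD] [uY YD]; split=> [|i j]; first exact: upper_triM.
by rewrite !mxE; apply: inD_sum => l; exact: inDM.
Qed.

Lemma in_TnD_diag (d : 'rV[{fraction D}]_n.+1) :
  (forall i, inD (d 0 i)) -> in_TnD (diag_mx d).
Proof.
move=> dD; split=> [|i j]; first exact: upper_tri_diag.
by rewrite mxE; case: eqP => _; rewrite ?mulr1n ?mulr0n; [exact: dD | exact: inD0].
Qed.

Lemma in_TnD0 : in_TnD (0 : M).
Proof. by split=> [i j _ | i j]; rewrite mxE //; exact: inD0. Qed.

Lemma in_TnDZ a X : inD a -> in_TnD X -> in_TnD (a *: X).
Proof.
by move=> aD [uX XD]; split=> [|i j]; [exact: upper_triZ | rewrite mxE; exact: inDM].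
Qed.

Lemma in_TnD1 : in_TnD (1 : M).
Proof.
by rewrite -idmxE -diag_const_mx; apply: in_TnD_diag => i; rewrite mxE; exact: inD1.
Qed.

Lemma in_TnD_delta i j : (i <= j)%N -> in_TnD (delta_mx i j : M).
Proof.
by move=> le_ij; split=> [|a b]; [exact: upper_tri_delta | rewrite mxE; exact: inD_nat].
Qed.

Lemma in_TnD_tail_proj k : in_TnD (tail_proj k : M).
Proof. by apply: in_TnD_diag => i; rewrite mxE; exact: inD_nat. Qed.

Lemma unipotent_deltaK a i j :
  i != j -> (1 - a *: delta_mx i j) * (1 + a *: delta_mx i j) = 1 :> M.
Proof.
move=> ij; rewrite mulrBl !mulrDr !mul1r mulr1 -scalerAl -scalerAr -mulmxE.
by rewrite mul_delta_mx_0 1?eq_sym // !scaler0 addr0 addrK.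
Qed.

Lemma in_TnD_antitrmx A : in_TnD A -> in_TnD (antitrmx A).
Proof. by move=> [uA AD]; split=> [|i j]; [exact: upper_tri_antitrmx | rewrite mxE]. Qed.

Section TwistedEvaluation.
Variables (f : {poly M}) (C : M).
Hypotheses (f_int : forall B, in_TnD B -> in_TnD f.[B]) (C_int : in_TnD C).

Let twisted_int X := in_TnD (f * X%:P).[C].

Lemma twisted_int_intertwine X B :
  in_TnD X -> in_TnD B -> X * C = B * X -> twisted_int X.
Proof.
move=> XD BD XC; rewrite /twisted_int (horner_mulC_intertwine _ XC).
by apply: in_TnDM => //; exact: f_int.
Qed.

Lemma twisted_int0 : twisted_int 0.
Proof. by rewrite /twisted_int mulr0 horner0; exact: in_TnD0. Qed.

Lemma twisted_int1 : twisted_int 1.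
Proof. by rewrite /twisted_int mulr1; exact: f_int. Qed.

Lemma twisted_intD X Y : twisted_int X -> twisted_int Y -> twisted_int (X + Y).
Proof. by rewrite /twisted_int polyCD mulrDr hornerD; exact: in_TnDD. Qed.

Lemma twisted_intB X Y : twisted_int X -> twisted_int Y -> twisted_int (X - Y).
Proof. by rewrite /twisted_int polyCB mulrBr hornerD hornerN; exact: in_TnDB. Qed.

Lemma twisted_int_delta a i j : inD a -> (i <= j)%N -> twisted_int (a *: delta_mx i j).
Proof.
move=> aD; rewrite leq_eqVlt => /orP[/eqP/val_inj <- | lt_ij].
  have tail_int k : twisted_int (a *: tail_proj k).
    have PD := in_TnD_tail_proj k.
    apply: (twisted_int_intertwine (in_TnDZ aD PD) (in_TnDM PD C_int)).
    by rewrite -scalerAl -scalerAr -tail_proj_upper //; case: C_int.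
  by rewrite delta_tail_proj scalerBr; apply: twisted_intB.
have ij : i != j by rewrite neq_ltn lt_ij.
have ED : in_TnD (a *: delta_mx i j : M) by apply/in_TnDZ/in_TnD_delta/ltnW.
rewrite -(addKr 1 (a *: delta_mx i j)) addrC; apply: twisted_intB twisted_int1.
apply: (twisted_int_intertwine (in_TnDD in_TnD1 ED)
  (in_TnDM (in_TnDM (in_TnDD in_TnD1 ED) C_int) (in_TnDB in_TnD1 ED))).
by rewrite -mulrA unipotent_deltaK // mulr1.
Qed.

Lemma twisted_int_TnD A : in_TnD A -> twisted_int A.
Proof.
move=> [uA AD]; rewrite (matrix_sum_delta A).
apply: (big_ind twisted_int twisted_int0 twisted_intD) => i _.
apply: (big_ind twisted_int twisted_int0 twisted_intD) => j _.
have [ji | ij] := ltnP j i; first by rewrite uA // scale0r; exact: twisted_int0.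
exact: twisted_int_delta.
Qed.

End TwistedEvaluation.

End TriangularIntegralMatrices.

Section IntegerValuedPolynomials.
Variables (D : idomainType) (n : nat).
Implicit Types (f g : {poly 'M[{fraction D}]_n.+1}).

Lemma IntR_horner f : IntR f -> forall C, in_TnD C -> in_TnD f.[C].
Proof. by move=> [_ f_int] C; rewrite -rsubstE; exact: f_int. Qed.

Lemma IntR_subring : is_subring (@IntR D n).
Proof.
split.
- split=> [|C _]; first exact: poly_TnK1.
  by rewrite rsubstE hornerC; exact: in_TnD1.
- move=> f g fI gI; split=> [|C CD]; first exact: poly_TnKB fI.1 gI.1.
  by rewrite rsubstE hornerD hornerN; apply: in_TnDB; exact: IntR_horner.
- move=> f g fI gI; split=> [|C CD]; first exact: poly_TnKM fI.1 gI.1.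
  rewrite rsubstE horner_mul_hornerC.
  exact: twisted_int_TnD (IntR_horner fI) CD _ (IntR_horner gI CD).
Qed.

Lemma IntL_IntR f : IntL f <-> IntR (map_poly antitrmx f).
Proof.
split=> [[fT f_int] | [fT f_int]]; split=> [|C CD].
- exact: poly_TnK_map_antitrmx.
- by rewrite rsubstE horner_map_antitrmx; apply/in_TnD_antitrmx/f_int/in_TnD_antitrmx.
- by rewrite -[f]map_antitrmxK; exact: poly_TnK_map_antitrmx.
- by rewrite lsubst_antitrmx -rsubstE; apply/in_TnD_antitrmx/f_int/in_TnD_antitrmx.
Qed.

Lemma IntL_subring : is_subring (@IntL D n).
Proof.
have [IntR1 IntRB IntRM] := IntR_subring.
split=> [|f g /IntL_IntR fI /IntL_IntR gI|f g /IntL_IntR fI /IntL_IntR gI]; apply/IntL_IntR.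
- by rewrite map_antitrmx1.
- by rewrite raddfB; exact: IntRB.
- by rewrite map_antitrmxM; exact: IntRM.
Qed.

End IntegerValuedPolynomials.

Theorem theorem5p4 (D : idomainType) (n : nat) :
  is_subring (@IntR D n) /\ is_subring (@IntL D n).
Proof. by split; [exact: IntR_subring | exact: IntL_subring]. Qed.
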